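(* Let $(\rho,m,\theta)$ be a smooth positive triple on $(0,T]\times\omega$ with $m=0$ on $\partial\omega$ which satisfies, for all $t$ and all $q\in L^2(\omega)$, $v\in H_0(\mathrm{div};\omega)$, $w\in H^1(\omega)$, \begin{align*} (\partial_t\rho,q)+(\partial_x m,q)&=0,\\ \Big(\frac1\rho\partial_t m-\frac{m}{2\rho^2}\partial_t\rho,v\Big)-\Big(\frac{m^2}{2\rho^2}+(\rho P)_\rho,\partial_x v\Big)+\Big(\frac{m}{2\rho^2}\partial_x m-P_\theta\partial_x\theta,v\Big)&=0,\\ \Big(\rho\,\partial_t e-\frac p\rho\partial_t\rho,\frac w\theta\Big)-\Big(Q-\theta P_\theta,\partial_x\Big(m\frac w\theta\Big)\Big)+\Big(mP_\theta\partial_x\theta,\frac w\theta\Big)&=0. \end{align*} Then \[ \frac{d}{dt}\int_\omega\rho\,dx=0,\qquad \frac{d}{dt}\int_\omega E\,dx=0,\qquad \frac{d}{dt}\int_\omega\rho s\,dx=0. \]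
   Context: Let $\omega=[v_1,v_2]\subset\mathbb R$ be a bounded closed interval; $(u,v)=\int_\omega uv\,dx$, $H^1(\omega)=\{w\in L^2:\partial_x w\in L^2\}$, $H_0(\mathrm{div};\omega)=\{v\in L^2:\partial_x v\in L^2,\ v=0\text{ on }\partial\omega\}$. Subscripts denote partial derivatives. The constitutive relations are given through a pressure potential $P\in C^3((0,\infty)^2)$ and a thermal potential $Q\in C^2((0,\infty))$ (function of $\theta$ only), satisfying for all $\rho,\theta>0$: $P_\rho\ge 0$, $(\rho P_\rho)_\rho\ge 0$, and $Q_\theta-\theta P_{\theta\theta}\ge \underline c_v>0$. The pressure is $p=\rho^2P_\rho$, the specific internal energy $e=P-\theta P_\theta+Q$, the specific entropy $s(\rho,\theta)=\int_1^\theta\frac{Q_\theta(t)}{t}dt-P_\theta(\rho,\theta)$, and the total energy density $E=\frac{m^2}{2\rho}+\rho e$, all evaluated at $(\rho,\theta)$. A smooth positive triple is $(\rho,m,\theta)\in C^1((0,T]\times\omega)^3$ with $\rho,\theta>0$. *)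

From Stdlib Require Import Reals Lra ClassicalEpsilon.
Open Scope R_scope.

(* Derivative of a one-variable function (0 where it does not exist). *)
Definition der1 (f : R -> R) (x : R) : R :=
  match excluded_middle_informative (exists l, derivable_pt_lim f x l) with
  | left H => proj1_sig (constructive_indefinite_description _ H)
  | right _ => 0
  end.

Definition pd1 (f : R -> R -> R) (a b : R) : R := der1 (fun r => f r b) a.
Definition pd2 (f : R -> R -> R) (a b : R) : R := der1 (fun s => f a s) b.

(* Oriented Riemann integral int_a^b f (0 if f is not Riemann integrable;
   RiemannInt is independent of the integrability proof). *)
Definition integral (f : R -> R) (a b : R) : R :=
  match excluded_middle_informative (exists pr : Riemann_integrable f a b, True) with
  | left H => RiemannInt (proj1_sig (constructive_indefinite_description _ H))
  | right _ => 0
  end.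

(* L^2 inner product on omega = [a,b] *)
Definition ip (a b : R) (f g : R -> R) : R := integral (fun x => f x * g x) a b.

Definition cont2_on (D : R -> R -> Prop) (f : R -> R -> R) : Prop :=
  forall a b, D a b -> forall eps, 0 < eps -> exists del, 0 < del /\
    forall a' b', Rabs (a' - a) < del -> Rabs (b' - b) < del ->
      Rabs (f a' b' - f a b) < eps.

Fixpoint Ck2 (k : nat) (D : R -> R -> Prop) (f : R -> R -> R) : Prop :=
  match k with
  | O => cont2_on D f
  | S k' => cont2_on D f /\
      (forall a b, D a b ->
         (exists l, derivable_pt_lim (fun r => f r b) a l) /\
         (exists l, derivable_pt_lim (fun s => f a s) b l)) /\
      Ck2 k' D (pd1 f) /\ Ck2 k' D (pd2 f)
  end.

Fixpoint Ck1 (k : nat) (D : R -> Prop) (f : R -> R) : Prop :=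
  match k with
  | O => forall x, D x -> continuity_pt f x
  | S k' => (forall x, D x -> continuity_pt f x) /\
      (forall x, D x -> exists l, derivable_pt_lim f x l) /\
      Ck1 k' D (der1 f)
  end.

(* test-function classes on omega = [a,b] (continuous / C^1 on a
   neighbourhood of [a,b]) *)
Definition C0_near (a b : R) (f : R -> R) : Prop :=
  exists d, 0 < d /\ Ck1 0 (fun x => a - d < x < b + d) f.
Definition C1_near (a b : R) (f : R -> R) : Prop :=
  exists d, 0 < d /\ Ck1 1 (fun x => a - d < x < b + d) f.

Definition pres (P : R -> R -> R) (r th : R) : R := r ^ 2 * pd1 P r th.
Definition eint (P : R -> R -> R) (Q : R -> R) (r th : R) : R :=
  P r th - th * pd2 P r th + Q th.
Definition entr (P : R -> R -> R) (Q : R -> R) (r th : R) : R :=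
  integral (fun tau => der1 Q tau / tau) 1 th - pd2 P r th.
Definition Etot (P : R -> R -> R) (Q : R -> R) (r mm th : R) : R :=
  mm ^ 2 / (2 * r) + r * eint P Q r th.

From Stdlib Require Import Reals Lra ClassicalEpsilon.
From Coquelicot Require Import Coquelicot.
Open Scope R_scope.

(* Testing the mass equation with its own residual [q = d_t rho + d_x m] gives
   [int q^2 = 0], so [d_t rho = - d_x m] pointwise and [int d_t rho = -[m] = 0].
   Testing the momentum equation with [v = m] and the energy equation with
   [w = theta] and adding the two, one obtains exactly [int d_t E] once
   [d_t rho = - d_x m] is substituted.  Testing the energy equation with [w = 1]
   gives [int d_t (rho s)] up to the exact derivative [d_x (m (Q/theta - S(theta)))],
   where [S] is the caloric part of the entropy; it integrates to zero because [m]
   vanishes on the boundary.  Time derivatives pass under the integral because all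
   integrands are jointly continuous near the slab [(0,T] x omega]. *)

Lemma der1_eq_lim f x l : derivable_pt_lim f x l -> der1 f x = l.
Proof.
  intros H. unfold der1.
  destruct (excluded_middle_informative _) as [H1|H1].
  - destruct (constructive_indefinite_description _ H1) as [l' Hl']; simpl.
    exact (uniqueness_limite f x l' l Hl' H).
  - exfalso; apply H1; exists l; exact H.
Qed.

Lemma der1_eq_lim_loc f g x l : locally x (fun y => g y = f y) ->
  derivable_pt_lim g x l -> der1 f x = l.
Proof.
  intros Hfg Hg. apply der1_eq_lim, is_derive_Reals.
  apply (is_derive_ext_loc g f); [exact Hfg|]. apply is_derive_Reals; exact Hg.
Qed.

Lemma derivable_pt_lim_eq_val f x l1 l2 :
  derivable_pt_lim f x l1 -> l1 = l2 -> derivable_pt_lim f x l2.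
Proof. intros H <-; exact H. Qed.

Lemma integral_RInt f a b : ex_RInt f a b -> integral f a b = RInt f a b.
Proof.
  intros H. unfold integral.
  destruct (excluded_middle_informative _) as [H1|H1].
  - destruct (constructive_indefinite_description _ H1) as [pr Hpr]; simpl.
    symmetry; apply RInt_Reals.
  - exfalso; apply H1; exists (ex_RInt_Reals_0 f a b H); exact I.
Qed.

Lemma ex_RInt_continuous_on (f : R -> R) a b : a <= b ->
  (forall x, a <= x <= b -> continuous f x) -> ex_RInt f a b.
Proof.
  intros Hab Hf. apply (@ex_RInt_continuous R_CompleteNormedModule).
  rewrite Rmin_left, Rmax_right by lra. exact Hf.
Qed.

Lemma RInt_ext_open (f g : R -> R) a b : a <= b ->
  (forall x, a < x < b -> f x = g x) -> RInt f a b = RInt g a b.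
Proof. intros Hab H. apply RInt_ext. rewrite Rmin_left, Rmax_right by lra. exact H. Qed.

Lemma is_RInt_ext_open (f g : R -> R) a b (l : R) : a <= b ->
  (forall x, a < x < b -> f x = g x) -> is_RInt f a b l -> is_RInt g a b l.
Proof.
  intros Hab H. apply (@is_RInt_ext R_CompleteNormedModule).
  rewrite Rmin_left, Rmax_right by lra. exact H.
Qed.

Lemma Ck2_down k D f : Ck2 (S k) D f -> Ck2 k D f.
Proof.
  revert f; induction k as [|k IH]; intros f H.
  - exact (proj1 H).
  - destruct H as [H0 [H1 [H2 H3]]]. split; [exact H0|]. split; [exact H1|].
    split; apply IH; assumption.
Qed.

Lemma Ck1_down k D f : Ck1 (S k) D f -> Ck1 k D f.
Proof.
  revert f; induction k as [|k IH]; intros f H.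
  - exact (proj1 H).
  - destruct H as [H0 [H1 H2]]. split; [exact H0|]. split; [exact H1|]. apply IH, H2.
Qed.

Lemma cont2_on_continuity_2d_pt (D : R -> R -> Prop) f a b :
  cont2_on D f -> D a b -> continuity_2d_pt f a b.
Proof.
  intros H Hab eps. destruct (H a b Hab eps (cond_pos eps)) as [d [Hd Hf]].
  exists (mkposreal d Hd). exact Hf.
Qed.

Section Ck2_one.

Variables (D : R -> R -> Prop) (f : R -> R -> R) (a b : R).
Hypotheses (Hf : Ck2 1 D f) (Hab : D a b).

Lemma Ck2_derivable_pd1 : derivable_pt_lim (fun r => f r b) a (pd1 f a b).
Proof.
  destruct (proj1 (proj2 Hf) a b Hab) as [[l Hl] _].
  unfold pd1; rewrite (der1_eq_lim _ _ _ Hl); exact Hl.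
Qed.

Lemma Ck2_derivable_pd2 : derivable_pt_lim (fun s => f a s) b (pd2 f a b).
Proof.
  destruct (proj1 (proj2 Hf) a b Hab) as [_ [l Hl]].
  unfold pd2; rewrite (der1_eq_lim _ _ _ Hl); exact Hl.
Qed.

Lemma Ck2_continuity : continuity_2d_pt f a b.
Proof. exact (cont2_on_continuity_2d_pt D f a b (proj1 Hf) Hab). Qed.

Lemma Ck2_continuity_pd1 : continuity_2d_pt (pd1 f) a b.
Proof. exact (cont2_on_continuity_2d_pt D _ a b (proj1 (proj2 (proj2 Hf))) Hab). Qed.

Lemma Ck2_continuity_pd2 : continuity_2d_pt (pd2 f) a b.
Proof. exact (cont2_on_continuity_2d_pt D _ a b (proj2 (proj2 (proj2 Hf))) Hab). Qed.

End Ck2_one.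

Lemma continuity_2d_pt_snd f a b :
  continuity_2d_pt f a b -> continuous (fun v => f a v) b.
Proof.
  intros H. apply continuity_pt_filterlim.
  intros eps Heps. destruct (H (mkposreal eps Heps)) as [d Hd].
  exists d. split; [apply cond_pos|]. intros x [_ Hx]. simpl in *. unfold R_dist in *.
  apply Hd; [rewrite Rminus_eq_0, Rabs_R0; apply cond_pos|exact Hx].
Qed.

Lemma continuity_2d_pt_comp G f g a b : continuity_2d_pt G (f a b) (g a b) ->
  continuity_2d_pt f a b -> continuity_2d_pt g a b ->
  continuity_2d_pt (fun u v => G (f u v) (g u v)) a b.
Proof.
  intros HG Hf Hg eps. destruct (HG eps) as [d1 H1].
  destruct (Hf d1) as [d2 H2]. destruct (Hg d1) as [d3 H3].
  assert (Hd : 0 < Rmin d2 d3) by (apply Rmin_pos; apply cond_pos).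
  exists (mkposreal _ Hd). intros u v Hu Hv; simpl in *.
  assert (Rmin d2 d3 <= d2) by apply Rmin_l. assert (Rmin d2 d3 <= d3) by apply Rmin_r.
  apply H1; [apply H2|apply H3]; lra.
Qed.

Lemma continuity_2d_pt_pow f a b n :
  continuity_2d_pt f a b -> continuity_2d_pt (fun u v => f u v ^ n) a b.
Proof.
  intros H. induction n as [|n IH].
  - exact (continuity_2d_pt_const a b 1).
  - apply continuity_2d_pt_mult; assumption.
Qed.

Lemma continuity_2d_pt_div f g a b : continuity_2d_pt f a b ->
  continuity_2d_pt g a b -> g a b <> 0 ->
  continuity_2d_pt (fun u v => f u v / g u v) a b.
Proof.
  intros Hf Hg Hn. apply continuity_2d_pt_mult; [exact Hf|].
  apply continuity_2d_pt_inv; assumption.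
Qed.

Lemma continuity_2d_pt_locally_pos f a b : continuity_2d_pt f a b -> 0 < f a b ->
  locally_2d (fun u v => 0 < f u v) a b.
Proof.
  intros H Hp. destruct (H (mkposreal _ Hp)) as [d Hd]. exists d.
  intros u v Hu Hv. specialize (Hd u v Hu Hv). simpl in Hd.
  apply Rabs_def2 in Hd. lra.
Qed.

(** * Chain rule through a [C^1] function of two variables *)

(* Only the partial in the first variable is assumed continuous: the mean value
   theorem in that variable plus differentiability in the second suffices. *)
Lemma differentiable_pt_lim_partials (G g1 : R -> R -> R) r0 th0 l2 :
  locally_2d (fun u v => derivable_pt_lim (fun z => G z v) u (g1 u v)) r0 th0 ->
  continuity_2d_pt g1 r0 th0 ->
  derivable_pt_lim (fun s => G r0 s) th0 l2 ->
  differentiable_pt_lim G r0 th0 (g1 r0 th0) l2.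
Proof.
  intros [d0 Hd0] Hc Hl eps.
  assert (He2 : 0 < eps / 2) by (generalize (cond_pos eps); lra).
  destruct (Hc (mkposreal _ He2)) as [d1 Hd1].
  destruct (Hl _ He2) as [d2 Hd2].
  assert (Hd : 0 < Rmin d0 (Rmin d1 d2)) by (repeat apply Rmin_pos; apply cond_pos).
  exists (mkposreal _ Hd). intros u v Hu Hv; simpl in Hu, Hv.
  assert (M0 := Rmin_l d0 (Rmin d1 d2)). assert (M1 := Rmin_r d0 (Rmin d1 d2)).
  assert (M2 := Rmin_l d1 d2). assert (M3 := Rmin_r d1 d2).
  assert (A : Rabs ((G u v - g1 r0 th0 * u) - (G r0 v - g1 r0 th0 * r0))
              <= eps / 2 * Rabs (u - r0)).
  { apply (bounded_variation (fun z => G z v - g1 r0 th0 * z) (fun z => g1 z v - g1 r0 th0)).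
    intros z Hz. split.
    - apply is_derive_Reals. apply derivable_pt_lim_minus.
      + apply Hd0; lra.
      + apply (derivable_pt_lim_eq_val _ _ (g1 r0 th0 * 1)); [|ring].
        apply derivable_pt_lim_scal, derivable_pt_lim_id.
    - apply Rlt_le, Hd1; lra. }
  assert (B : Rabs (G r0 v - G r0 th0 - l2 * (v - th0)) <= eps / 2 * Rabs (v - th0)).
  { destruct (Req_dec v th0) as [->|E].
    - rewrite !Rminus_eq_0, Rmult_0_r, Rminus_0_r, Rabs_R0. lra.
    - assert (Hh : v - th0 <> 0) by lra.
      specialize (Hd2 (v - th0) Hh ltac:(lra)).
      replace (th0 + (v - th0)) with v in Hd2 by ring.
      replace (G r0 v - G r0 th0 - l2 * (v - th0)) with
        (((G r0 v - G r0 th0) / (v - th0) - l2) * (v - th0)) by (field; exact Hh).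
      rewrite Rabs_mult. apply Rmult_le_compat_r; [apply Rabs_pos|lra]. }
  replace (G u v - G r0 th0 - (g1 r0 th0 * (u - r0) + l2 * (v - th0))) with
    (((G u v - g1 r0 th0 * u) - (G r0 v - g1 r0 th0 * r0))
     + (G r0 v - G r0 th0 - l2 * (v - th0))) by ring.
  eapply Rle_trans; [apply Rabs_triang|].
  assert (X1 := Rmax_l (Rabs (u - r0)) (Rabs (v - th0))).
  assert (X2 := Rmax_r (Rabs (u - r0)) (Rabs (v - th0))).
  generalize (cond_pos eps); intros. nra.
Qed.

Lemma derivable_pt_lim_comp_Ck2 (D : R -> R -> Prop) G a b z0 la lb :
  Ck2 1 D G -> locally_2d D (a z0) (b z0) ->
  derivable_pt_lim a z0 la -> derivable_pt_lim b z0 lb ->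
  derivable_pt_lim (fun z => G (a z) (b z)) z0
    (pd1 G (a z0) (b z0) * la + pd2 G (a z0) (b z0) * lb).
Proof.
  intros HG [d Hd] Ha Hb.
  apply derivable_pt_lim_comp_2d; [|exact Ha|exact Hb].
  assert (HD : D (a z0) (b z0)).
  { apply Hd; rewrite Rminus_eq_0, Rabs_R0; apply cond_pos. }
  apply differentiable_pt_lim_partials.
  - exists d. intros u v Hu Hv. exact (Ck2_derivable_pd1 D G u v HG (Hd u v Hu Hv)).
  - exact (Ck2_continuity_pd1 D G _ _ HG HD).
  - exact (Ck2_derivable_pd2 D G _ _ HG HD).
Qed.

(** * Integrals *)

Lemma derivable_pt_lim_integral_param (U : R -> R -> Prop) (F dF : R -> R -> R) a b t0 :
  a < b ->
  (forall u v, U u v -> locally_2d U u v) ->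
  locally t0 (fun y => forall x, a <= x <= b -> U y x) ->
  (forall u v, U u v -> derivable_pt_lim (fun z => F z v) u (dF u v)) ->
  (forall u v, U u v -> continuity_2d_pt dF u v) ->
  (forall u v, U u v -> continuity_2d_pt F u v) ->
  derivable_pt_lim (fun tau => integral (fun x => F tau x) a b) t0
    (RInt (fun x => dF t0 x) a b).
Proof.
  intros Hab Uop Ut0 Hd Hcd Hc.
  assert (Hmin : Rmin a b = a) by (apply Rmin_left; lra).
  assert (Hmax : Rmax a b = b) by (apply Rmax_right; lra).
  assert (Hex : locally t0 (fun y => ex_RInt (fun x => F y x) a b)).
  { apply (filter_imp _ _ (fun y HU => ex_RInt_continuous_on _ a b (Rlt_le _ _ Hab)
           (fun x Hx => continuity_2d_pt_snd F y x (Hc y x (HU x Hx))))), Ut0. }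
  assert (HU0 : forall x, a <= x <= b -> U t0 x) by apply (locally_singleton _ _ Ut0).
  assert (HD : is_derive (fun y => RInt (fun x => F y x) a b) t0
                 (RInt (fun x => Derive (fun u => F u x) t0) a b)).
  { apply is_derive_RInt_param; [|intros x Hx|exact Hex].
    - eapply filter_imp; [|exact Ut0]. intros y HU x Hx. exists (dF y x).
      apply is_derive_Reals, Hd, HU. rewrite Hmin, Hmax in Hx; exact Hx.
    - rewrite Hmin, Hmax in Hx.
      apply (continuity_2d_pt_ext_loc dF); [|apply Hcd, HU0, Hx].
      destruct (Uop _ _ (HU0 x Hx)) as [e He]. exists e. intros u v Hu Hv.
      symmetry. apply is_derive_unique, is_derive_Reals, Hd, He; assumption. }
  rewrite (RInt_ext _ (fun x => dF t0 x)) in HD.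
  2:{ rewrite Hmin, Hmax. intros x Hx.
      apply is_derive_unique, is_derive_Reals, Hd, HU0. lra. }
  apply is_derive_Reals.
  apply (is_derive_ext_loc (fun y => RInt (fun x => F y x) a b)); [|exact HD].
  apply (filter_imp _ _ (fun y Hy => eq_sym (integral_RInt _ a b Hy))), Hex.
Qed.

Lemma derivable_pt_lim_integral_upper (h : R -> R) y :
  (forall s, 0 < s -> continuity_pt h s) -> 0 < y ->
  derivable_pt_lim (fun z => integral h 1 z) y (h y).
Proof.
  intros Hh Hy.
  assert (Hpos : locally y (fun z => 0 < z)).
  { apply (locally_interval _ _ (Finite 0) p_infty); simpl; auto. }
  assert (Hex : locally y (fun z => ex_RInt h 1 z)).
  { eapply filter_imp; [|exact Hpos]. intros z Hz.
    apply (@ex_RInt_continuous R_CompleteNormedModule). intros s Hs.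
    apply continuity_pt_filterlim, Hh.
    assert (0 < Rmin 1 z) by (apply Rmin_pos; lra). lra. }
  apply is_derive_Reals.
  apply (is_derive_ext_loc (fun z => RInt h 1 z)).
  - apply (filter_imp _ _ (fun z Hz => eq_sym (integral_RInt h 1 z Hz))), Hex.
  - apply (is_derive_RInt h (fun z => RInt h 1 z) 1 y).
    + apply (filter_imp _ _ (fun z Hz => @RInt_correct R_CompleteNormedModule h 1 z Hz)), Hex.
    + apply continuity_pt_filterlim, Hh, Hy.
Qed.

Lemma is_RInt_derive_vanishing_ends (g dg : R -> R) a b : a <= b ->
  (forall x, a <= x <= b -> derivable_pt_lim g x (dg x)) ->
  (forall x, a <= x <= b -> continuous dg x) ->
  g a = 0 -> g b = 0 -> is_RInt dg a b 0.
Proof.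
  intros Hab Hd Hc Ha Hb.
  replace 0 with (minus (g b) (g a))
    by (rewrite Ha, Hb; apply (minus_eq_zero (G := R_AbelianGroup))).
  apply (is_RInt_derive (V := R_CompleteNormedModule));
    rewrite Rmin_left, Rmax_right by lra; intros x Hx.
  - apply is_derive_Reals, Hd, Hx.
  - apply Hc, Hx.
Qed.

(* If [q x0 <> 0], the square stays above [q x0 ^ 2 / 2] on an interval around [x0]. *)
Lemma RInt_sqr_eq_0 (q : R -> R) a b : a < b -> (forall x, a <= x <= b -> continuous q x) ->
  RInt (fun x => q x * q x) a b = 0 -> forall x, a < x < b -> q x = 0.
Proof.
  intros Hab Hc Hz x0 Hx0.
  destruct (Req_dec (q x0) 0) as [E|E]; [exact E|exfalso].
  set (g := fun x => q x * q x).
  assert (Hgc : forall x, a <= x <= b -> continuous g x).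
  { intros x Hx. apply (continuous_mult q q); apply Hc; exact Hx. }
  assert (Hp : 0 < g x0 / 2) by (unfold g; nra).
  destruct (proj2 (continuity_pt_filterlim g x0) (Hgc x0 ltac:(lra)) _ Hp) as [d [Hd Hdy]].
  set (e := Rmin (d / 2) (Rmin ((x0 - a) / 2) ((b - x0) / 2))).
  assert (He1 : e <= d / 2) by apply Rmin_l.
  assert (He2 : e <= (x0 - a) / 2) by (eapply Rle_trans; [apply Rmin_r|apply Rmin_l]).
  assert (He3 : e <= (b - x0) / 2) by (eapply Rle_trans; [apply Rmin_r|apply Rmin_r]).
  assert (He0 : 0 < e) by (unfold e; repeat apply Rmin_pos; lra).
  assert (Ex : forall c c', a <= c -> c <= c' -> c' <= b -> ex_RInt g c c').
  { intros c c' H1 H2 H3. apply ex_RInt_continuous_on; [exact H2|]. intros; apply Hgc; lra. }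
  assert (I1 : 0 <= RInt g a (x0 - e)).
  { apply RInt_ge_0; [lra|apply Ex; lra|]. intros; unfold g; nra. }
  assert (I3 : 0 <= RInt g (x0 + e) b).
  { apply RInt_ge_0; [lra|apply Ex; lra|]. intros; unfold g; nra. }
  assert (I2 : 0 < RInt g (x0 - e) (x0 + e)).
  { apply RInt_gt_0; [lra| |intros; apply Hgc; lra].
    intros x Hx. destruct (Req_dec x x0) as [->|Nx]; [lra|].
    assert (Hxd : Rabs (x - x0) < d) by (apply Rabs_def1; lra).
    assert (Hd' := Hdy x (conj (conj I (not_eq_sym Nx)) Hxd)).
    simpl in Hd'. unfold R_dist in Hd'. apply Rabs_def2 in Hd'. lra. }
  change (RInt g a b = 0) in Hz.
  rewrite <- (RInt_Chasles g a (x0 - e) b), <- (RInt_Chasles g (x0 - e) (x0 + e) b) in Hz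
    by (apply Ex; lra).
  unfold plus in Hz; simpl in Hz. lra.
Qed.

Lemma ip_is_RInt a b f g (K : R -> R -> R) t : a < b ->
  (forall x, a < x < b -> f x * g x = K t x) ->
  (forall x, a <= x <= b -> continuity_2d_pt K t x) ->
  is_RInt (fun x => K t x) a b (ip a b f g).
Proof.
  intros Hab E C.
  assert (Ex : ex_RInt (fun x => K t x) a b).
  { apply ex_RInt_continuous_on; [lra|]. intros x Hx. apply continuity_2d_pt_snd, C, Hx. }
  unfold ip. rewrite integral_RInt.
  - rewrite (RInt_ext_open _ (fun x => K t x)) by (lra || exact E).
    apply (@RInt_correct R_CompleteNormedModule), Ex.
  - apply (ex_RInt_ext (fun x => K t x)); [|exact Ex].
    rewrite Rmin_left, Rmax_right by lra. intros; symmetry; apply E; assumption.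
Qed.

Lemma ip3_is_RInt a b f1 g1 f2 g2 f3 g3 (K1 K2 K3 : R -> R -> R) t : a < b ->
  (forall x, a < x < b -> f1 x * g1 x = K1 t x) ->
  (forall x, a < x < b -> f2 x * g2 x = K2 t x) ->
  (forall x, a < x < b -> f3 x * g3 x = K3 t x) ->
  (forall x, a <= x <= b ->
     continuity_2d_pt K1 t x /\ continuity_2d_pt K2 t x /\ continuity_2d_pt K3 t x) ->
  is_RInt (fun x => K1 t x - K2 t x + K3 t x) a b
    (ip a b f1 g1 - ip a b f2 g2 + ip a b f3 g3).
Proof.
  intros Hab E1 E2 E3 C.
  apply (@is_RInt_plus R_CompleteNormedModule); [apply (@is_RInt_minus R_CompleteNormedModule)|];
    apply ip_is_RInt; try assumption; intros x Hx; apply C, Hx.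
Qed.

Lemma locally_2d_prod (A B : R -> Prop) x y :
  locally x A -> locally y B -> locally_2d (fun u v => A u /\ B v) x y.
Proof.
  intros [e1 H1] [e2 H2].
  assert (He : 0 < Rmin e1 e2) by (apply Rmin_pos; apply cond_pos).
  exists (mkposreal _ He). intros u v Hu Hv; simpl in Hu, Hv.
  assert (Rmin e1 e2 <= e1) by apply Rmin_l. assert (Rmin e1 e2 <= e2) by apply Rmin_r.
  split; [apply H1; change (Rabs (u - x) < e1)|apply H2; change (Rabs (v - y) < e2)]; lra.
Qed.

(** * Conservation laws *)

Section Conservation.

Variables (v1 v2 T del : R) (P : R -> R -> R) (Q : R -> R) (rho m theta : R -> R -> R).

Let Pdom (r th : R) := 0 < r /\ 0 < th.
Let D (t x : R) := 0 < t < T + del /\ v1 - del < x < v2 + del.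
Let Dpos (t x : R) := D t x /\ 0 < rho t x /\ 0 < theta t x.

Hypotheses (Hv : v1 < v2) (Hdel : 0 < del).
Hypotheses (CP : Ck2 2 Pdom P) (CQ : Ck1 1 (fun th => 0 < th) Q).
Hypotheses (Crho : Ck2 1 D rho) (Cm : Ck2 1 D m) (Ctheta : Ck2 1 D theta).
Hypothesis Hpos : forall t x, 0 < t <= T -> v1 <= x <= v2 ->
  0 < rho t x /\ 0 < theta t x.
Hypothesis Hbd : forall t, 0 < t <= T -> m t v1 = 0 /\ m t v2 = 0.

Let CP1 : Ck2 1 Pdom P := Ck2_down 1 Pdom P CP.
Let CP2 : Ck2 1 Pdom (pd2 P) := proj2 (proj2 (proj2 CP)).

Lemma Pdom_open r th : Pdom r th -> locally_2d Pdom r th.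
Proof.
  intros [Hr Hth]. apply locally_2d_prod;
    apply (locally_interval _ _ (Finite 0) p_infty); simpl; auto.
Qed.

Lemma Dpos_open t x : Dpos t x -> locally_2d Dpos t x.
Proof.
  intros [[Ht Hx] [Hr Hth]]. apply locally_2d_and; [|apply locally_2d_and].
  - apply locally_2d_prod; [apply (locally_interval _ _ (Finite 0) (Finite (T + del)))
                          |apply (locally_interval _ _ (Finite (v1 - del)) (Finite (v2 + del)))];
      simpl; auto; lra.
  - exact (continuity_2d_pt_locally_pos _ _ _ (Ck2_continuity D rho t x Crho (conj Ht Hx)) Hr).
  - exact (continuity_2d_pt_locally_pos _ _ _ (Ck2_continuity D theta t x Ctheta (conj Ht Hx)) Hth).
Qed.

Lemma Dpos_slab t x : 0 < t <= T -> v1 <= x <= v2 -> Dpos t x.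
Proof. intros Ht Hx. split; [split; lra|]. apply Hpos; assumption. Qed.

Lemma Dpos_slab_nbhd t : 0 < t < T -> locally t (fun y => forall x, v1 <= x <= v2 -> Dpos y x).
Proof.
  intros Ht. apply (locally_interval _ _ (Finite 0) (Finite T)); simpl; try lra.
  intros y Hy0 HyT x Hx. apply Dpos_slab; [lra|exact Hx].
Qed.

Lemma continuity_field f t x : Ck2 1 D f -> Dpos t x -> continuity_2d_pt f t x.
Proof. intros Hf Hg. exact (Ck2_continuity D f t x Hf (proj1 Hg)). Qed.

Lemma continuity_field_pd1 f t x : Ck2 1 D f -> Dpos t x -> continuity_2d_pt (pd1 f) t x.
Proof. intros Hf Hg. exact (Ck2_continuity_pd1 D f t x Hf (proj1 Hg)). Qed.

Lemma continuity_field_pd2 f t x : Ck2 1 D f -> Dpos t x -> continuity_2d_pt (pd2 f) t x.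
Proof. intros Hf Hg. exact (Ck2_continuity_pd2 D f t x Hf (proj1 Hg)). Qed.

Lemma continuity_state G t x : cont2_on Pdom G -> Dpos t x ->
  continuity_2d_pt (fun u v => G (rho u v) (theta u v)) t x.
Proof.
  intros HG Hg. apply continuity_2d_pt_comp.
  - exact (cont2_on_continuity_2d_pt Pdom G _ _ HG (proj2 Hg)).
  - apply continuity_field; assumption.
  - apply continuity_field; assumption.
Qed.

Lemma continuity_temperature g t x : (forall th, 0 < th -> continuity_pt g th) -> Dpos t x ->
  continuity_2d_pt (fun u v => g (theta u v)) t x.
Proof.
  intros Hg Hd. apply continuity_1d_2d_pt_comp; [apply Hg, Hd|apply continuity_field; assumption].
Qed.

Let cont_P : cont2_on Pdom P := proj1 CP1.
Let cont_P1 : cont2_on Pdom (pd1 P) := proj1 (proj2 (proj2 CP1)).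
Let cont_P2 : cont2_on Pdom (pd2 P) := proj1 CP2.
Let cont_P21 : cont2_on Pdom (pd1 (pd2 P)) := proj1 (proj2 (proj2 CP2)).
Let cont_P22 : cont2_on Pdom (pd2 (pd2 P)) := proj2 (proj2 (proj2 CP2)).
Let cont_Q : forall th, 0 < th -> continuity_pt Q th := proj1 CQ.
Let cont_dQ : forall th, 0 < th -> continuity_pt (der1 Q) th := proj2 (proj2 CQ).

#[local] Hint Resolve continuity_field continuity_field_pd1 continuity_field_pd2
  continuity_state continuity_temperature : cont2.

Lemma Dpos_pos t x : Dpos t x -> 0 < rho t x /\ 0 < theta t x.
Proof. intros Hg; apply Hg. Qed.

Ltac cont2 :=
  repeat first
    [ apply continuity_2d_pt_plus | apply continuity_2d_pt_minus
    | apply continuity_2d_pt_opp | apply continuity_2d_pt_inv | apply continuity_2d_pt_div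
    | apply continuity_2d_pt_mult | apply continuity_2d_pt_pow
    | apply continuity_2d_pt_const | solve [eauto with cont2] ];
  match goal with Hg : Dpos _ _ |- _ => destruct (Dpos_pos _ _ Hg) end; nra.

Lemma field_dt f t x : Ck2 1 D f -> Dpos t x -> derivable_pt_lim (fun z => f z x) t (pd1 f t x).
Proof. intros Hf Hg. exact (Ck2_derivable_pd1 D f t x Hf (proj1 Hg)). Qed.

Lemma field_dx f t x : Ck2 1 D f -> Dpos t x -> derivable_pt_lim (fun y => f t y) x (pd2 f t x).
Proof. intros Hf Hg. exact (Ck2_derivable_pd2 D f t x Hf (proj1 Hg)). Qed.

Lemma derivable_pt_lim_state G a b z la lb : Ck2 1 Pdom G -> 0 < a z -> 0 < b z ->
  derivable_pt_lim a z la -> derivable_pt_lim b z lb ->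
  derivable_pt_lim (fun y => G (a y) (b y)) z
    (pd1 G (a z) (b z) * la + pd2 G (a z) (b z) * lb).
Proof.
  intros HG Ha Hb. apply (derivable_pt_lim_comp_Ck2 Pdom); [exact HG|].
  apply Pdom_open; split; assumption.
Qed.

Lemma derivable_pt_lim_Q th : 0 < th -> derivable_pt_lim Q th (der1 Q th).
Proof.
  intros Hth. destruct (proj1 (proj2 CQ) th Hth) as [l Hl].
  rewrite (der1_eq_lim _ _ _ Hl). exact Hl.
Qed.

Let eint_rate u v :=
  (pd1 P (rho u v) (theta u v) - theta u v * pd1 (pd2 P) (rho u v) (theta u v)) * pd1 rho u v
  + (der1 Q (theta u v) - theta u v * pd2 (pd2 P) (rho u v) (theta u v)) * pd1 theta u v.

Lemma eint_derivable t x : Dpos t x ->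
  derivable_pt_lim (fun z => eint P Q (rho z x) (theta z x)) t (eint_rate t x).
Proof.
  intros Hg. destruct (Dpos_pos t x Hg) as [Hr Hth].
  assert (Hrho := field_dt rho t x Crho Hg). assert (Htheta := field_dt theta t x Ctheta Hg).
  unfold eint. eapply derivable_pt_lim_eq_val.
  - apply derivable_pt_lim_plus; [apply derivable_pt_lim_minus|].
    + exact (derivable_pt_lim_state P _ _ t _ _ CP1 Hr Hth Hrho Htheta).
    + apply derivable_pt_lim_mult; [exact Htheta|].
      exact (derivable_pt_lim_state (pd2 P) _ _ t _ _ CP2 Hr Hth Hrho Htheta).
    + apply (derivable_pt_lim_comp (fun z => theta z x) Q); [exact Htheta|].
      apply derivable_pt_lim_Q, Hth.
  - unfold eint_rate. ring.
Qed.

Lemma pd1_eint_state t x : Dpos t x ->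
  pd1 (fun t' x' => eint P Q (rho t' x') (theta t' x')) t x = eint_rate t x.
Proof. intros Hg. apply der1_eq_lim, eint_derivable, Hg. Qed.

Lemma pd1_mul_id_P r th : 0 < r -> 0 < th ->
  pd1 (fun r th => r * P r th) r th = P r th + r * pd1 P r th.
Proof.
  intros Hr Hth. apply der1_eq_lim. eapply derivable_pt_lim_eq_val.
  - apply (derivable_pt_lim_mult id (fun z => P z th)); [apply derivable_pt_lim_id|].
    exact (Ck2_derivable_pd1 Pdom P r th CP1 (conj Hr Hth)).
  - unfold id. ring.
Qed.

(* Caloric part of the entropy: [entr P Q r th] unfolds to [S th - pd2 P r th]. *)
Let S th := integral (fun s => der1 Q s / s) 1 th.

Lemma S_derivable th : 0 < th -> derivable_pt_lim S th (der1 Q th / th).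
Proof.
  apply (derivable_pt_lim_integral_upper (fun s => der1 Q s / s)).
  intros s Hs. apply continuity_pt_div; [apply cont_dQ, Hs|apply continuity_pt_id|lra].
Qed.

Let cont_S : forall th, 0 < th -> continuity_pt S th :=
  fun th Hth => derivable_continuous_pt _ _ (exist _ _ (S_derivable th Hth)).

#[local] Hint Resolve cont_S : cont2.

Lemma C1_near_slice f t : 0 < t <= T -> Ck2 1 D f -> C1_near v1 v2 (fun x => f t x).
Proof.
  intros Ht Hf. exists del. split; [exact Hdel|].
  assert (HD : forall x, v1 - del < x < v2 + del -> D t x) by (intros x Hx; split; lra).
  split; [|split]; intros x Hx.
  - apply continuity_pt_filterlim, (continuity_2d_pt_snd f).
    exact (Ck2_continuity D f t x Hf (HD x Hx)).
  - exists (pd2 f t x). exact (Ck2_derivable_pd2 D f t x Hf (HD x Hx)).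
  - apply continuity_pt_filterlim, (continuity_2d_pt_snd (pd2 f)).
    exact (Ck2_continuity_pd2 D f t x Hf (HD x Hx)).
Qed.

Hypothesis Hmass : forall t, 0 < t <= T -> forall q, C0_near v1 v2 q ->
  ip v1 v2 (fun x => pd1 rho t x) q + ip v1 v2 (fun x => pd2 m t x) q = 0.

Lemma mass_balance t x : 0 < t <= T -> v1 < x < v2 -> pd1 rho t x + pd2 m t x = 0.
Proof.
  intros Ht Hx.
  assert (Cq0 : C0_near v1 v2 (fun y => pd1 rho t y + pd2 m t y)).
  { exists del. split; [exact Hdel|]. intros y Hy.
    assert (HD : D t y) by (split; lra).
    apply continuity_pt_filterlim, (continuity_2d_pt_snd (fun u v => pd1 rho u v + pd2 m u v)).
    apply continuity_2d_pt_plus;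
      [exact (Ck2_continuity_pd1 D rho t y Crho HD)|exact (Ck2_continuity_pd2 D m t y Cm HD)]. }
  assert (HI : is_RInt (fun y => pd1 rho t y * (pd1 rho t y + pd2 m t y)
                               + pd2 m t y * (pd1 rho t y + pd2 m t y)) v1 v2
                 (ip v1 v2 (fun y => pd1 rho t y) (fun y => pd1 rho t y + pd2 m t y)
                  + ip v1 v2 (fun y => pd2 m t y) (fun y => pd1 rho t y + pd2 m t y))).
  { apply (@is_RInt_plus R_CompleteNormedModule).
    - apply (ip_is_RInt _ _ _ _ (fun u v => pd1 rho u v * (pd1 rho u v + pd2 m u v)) t Hv);
        [intros; reflexivity|]; intros y Hy; assert (Hg := Dpos_slab t y Ht Hy); cont2.
    - apply (ip_is_RInt _ _ _ _ (fun u v => pd2 m u v * (pd1 rho u v + pd2 m u v)) t Hv);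
        [intros; reflexivity|]; intros y Hy; assert (Hg := Dpos_slab t y Ht Hy); cont2. }
  rewrite (Hmass t Ht _ Cq0) in HI.
  apply (RInt_sqr_eq_0 (fun y => pd1 rho t y + pd2 m t y) v1 v2 Hv); [|clear x Hx|exact Hx].
  - intros y Hy. apply (continuity_2d_pt_snd (fun u v => pd1 rho u v + pd2 m u v)).
    assert (Hg := Dpos_slab t y Ht Hy). cont2.
  - rewrite <- (is_RInt_unique _ _ _ _ HI). apply RInt_ext. intros y _. apply Rmult_plus_distr_r.
Qed.

Lemma mass_conservation t : 0 < t < T ->
  derivable_pt_lim (fun tau => integral (fun x => rho tau x) v1 v2) t 0.
Proof.
  intros Ht. assert (Ht' : 0 < t <= T) by lra.
  eapply derivable_pt_lim_eq_val.
  - apply (derivable_pt_lim_integral_param Dpos rho (pd1 rho) v1 v2 t Hv Dpos_open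
             (Dpos_slab_nbhd t Ht)); intros u v Hg; [exact (field_dt rho u v Crho Hg)|cont2|cont2].
  - apply is_RInt_unique, (is_RInt_ext_open (fun x => - pd2 m t x)); [lra| |].
    + intros x Hx.
      assert (H := mass_balance t x Ht' Hx). lra.
    + apply (is_RInt_derive_vanishing_ends (fun x => - m t x));
        [lra| | |apply Ropp_eq_0_compat, Hbd, Ht'..];
        intros x Hx; assert (Hg := Dpos_slab t x Ht' Hx).
      * apply derivable_pt_lim_opp, (field_dx m t x Cm Hg).
      * apply (continuity_2d_pt_snd (fun u v => - pd2 m u v)). cont2.
Qed.

Hypothesis Hmom : forall t, 0 < t <= T -> forall v, C1_near v1 v2 v ->
  v v1 = 0 -> v v2 = 0 ->
  ip v1 v2 (fun x => / rho t x * pd1 m t x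
                     - m t x / (2 * rho t x ^ 2) * pd1 rho t x) v
  - ip v1 v2 (fun x => m t x ^ 2 / (2 * rho t x ^ 2)
                       + pd1 (fun r th => r * P r th) (rho t x) (theta t x))
             (der1 v)
  + ip v1 v2 (fun x => m t x / (2 * rho t x ^ 2) * pd2 m t x
                       - pd2 P (rho t x) (theta t x) * pd2 theta t x) v = 0.

(* Integrands of the weak momentum equation tested with [v = m]. *)
Let kinetic_rate u v :=
  (/ rho u v * pd1 m u v - m u v / (2 * rho u v ^ 2) * pd1 rho u v) * m u v.
Let momentum_flux u v :=
  (m u v ^ 2 / (2 * rho u v ^ 2)
   + (P (rho u v) (theta u v) + rho u v * pd1 P (rho u v) (theta u v))) * pd2 m u v.
Let momentum_source u v :=
  (m u v / (2 * rho u v ^ 2) * pd2 m u v - pd2 P (rho u v) (theta u v) * pd2 theta u v) * m u v.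

Lemma momentum_tested_m t : 0 < t <= T ->
  is_RInt (fun x => kinetic_rate t x - momentum_flux t x + momentum_source t x) v1 v2 0.
Proof.
  intros Ht. destruct (Hbd t Ht) as [Hm1 Hm2].
  rewrite <- (Hmom t Ht _ (C1_near_slice m t Ht Cm) Hm1 Hm2).
  apply (ip3_is_RInt _ _ _ _ _ _ _ _ kinetic_rate momentum_flux momentum_source t Hv);
    [intros; reflexivity| |intros; reflexivity|].
  - intros x Hx. destruct (Hpos t x Ht ltac:(lra)) as [Hr Hth].
    rewrite pd1_mul_id_P by assumption. reflexivity.
  - intros x Hx. assert (Hg := Dpos_slab t x Ht Hx).
    unfold kinetic_rate, momentum_flux, momentum_source. repeat split; cont2.
Qed.

Hypothesis Hen : forall t, 0 < t <= T -> forall w, C1_near v1 v2 w ->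
  ip v1 v2 (fun x => rho t x
              * pd1 (fun t' x' => eint P Q (rho t' x') (theta t' x')) t x
              - pres P (rho t x) (theta t x) / rho t x * pd1 rho t x)
           (fun x => w x / theta t x)
  - ip v1 v2 (fun x => Q (theta t x)
                       - theta t x * pd2 P (rho t x) (theta t x))
             (der1 (fun x => m t x * (w x / theta t x)))
  + ip v1 v2 (fun x => m t x * pd2 P (rho t x) (theta t x) * pd2 theta t x)
             (fun x => w x / theta t x) = 0.

(* Coefficients of the weak energy equation, with [pd1 e] and [p / rho] evaluated. *)
Let heat u v :=
  rho u v * eint_rate u v - rho u v * pd1 P (rho u v) (theta u v) * pd1 rho u v.
Let heat_flux u v := Q (theta u v) - theta u v * pd2 P (rho u v) (theta u v).
Let heat_source u v := m u v * pd2 P (rho u v) (theta u v) * pd2 theta u v.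

Lemma heat_spec t x : 0 < t <= T -> v1 < x < v2 ->
  rho t x * pd1 (fun t' x' => eint P Q (rho t' x') (theta t' x')) t x
  - pres P (rho t x) (theta t x) / rho t x * pd1 rho t x = heat t x.
Proof.
  intros Ht Hx. assert (Hg := Dpos_slab t x Ht ltac:(lra)). destruct (Dpos_pos t x Hg).
  rewrite pd1_eint_state by exact Hg. unfold pres, heat. field. lra.
Qed.

Lemma energy_tested_theta t : 0 < t <= T ->
  is_RInt (fun x => heat t x - heat_flux t x * pd2 m t x + heat_source t x) v1 v2 0.
Proof.
  intros Ht. rewrite <- (Hen t Ht _ (C1_near_slice theta t Ht Ctheta)).
  apply (ip3_is_RInt _ _ _ _ _ _ _ _ heat (fun u v => heat_flux u v * pd2 m u v) heat_source t Hv);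
    [| |intros x Hx; destruct (Hpos t x Ht ltac:(lra)); unfold heat_source; field; lra
     |intros x Hx; assert (Hg := Dpos_slab t x Ht Hx);
      unfold heat, eint_rate, heat_flux, heat_source; repeat split; cont2].
  - intros x Hx. destruct (Hpos t x Ht ltac:(lra)). rewrite heat_spec by assumption. field. lra.
  - intros x Hx. unfold heat_flux. f_equal.
    apply (der1_eq_lim_loc _ (fun y => m t y));
      [|exact (field_dx m t x Cm (Dpos_slab t x Ht ltac:(lra)))].
    apply (locally_interval _ _ (Finite v1) (Finite v2)); simpl; try lra.
    intros y Hy1 Hy2. destruct (Hpos t y Ht ltac:(lra)). field. lra.
Qed.

Lemma C1_near_const c : C1_near v1 v2 (fun _ => c).
Proof.
  exists 1. split; [lra|]. split; [|split]; intros x _.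
  - apply continuity_pt_const. intros a b; reflexivity.
  - exists 0. apply derivable_pt_lim_const.
  - apply continuity_pt_const. intros a b.
    rewrite (der1_eq_lim _ a 0), (der1_eq_lim _ b 0) by apply derivable_pt_lim_const. reflexivity.
Qed.

Lemma energy_tested_one t : 0 < t <= T ->
  is_RInt (fun x => heat t x / theta t x
                    - heat_flux t x
                      * (pd2 m t x / theta t x - m t x * pd2 theta t x / theta t x ^ 2)
                    + heat_source t x / theta t x) v1 v2 0.
Proof.
  intros Ht. rewrite <- (Hen t Ht _ (C1_near_const 1)).
  apply (ip3_is_RInt _ _ _ _ _ _ _ _ (fun u v => heat u v / theta u v)
    (fun u v => heat_flux u v * (pd2 m u v / theta u v - m u v * pd2 theta u v / theta u v ^ 2))
    (fun u v => heat_source u v / theta u v) t Hv);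
    [| |intros x Hx; unfold heat_source; field; apply Rgt_not_eq, Hpos; lra
     |intros x Hx; assert (Hg := Dpos_slab t x Ht Hx);
      unfold heat, eint_rate, heat_flux, heat_source; repeat split; cont2].
  - intros x Hx. rewrite heat_spec by assumption. field. apply Rgt_not_eq, Hpos; lra.
  - intros x Hx. assert (Hg := Dpos_slab t x Ht ltac:(lra)). destruct (Dpos_pos t x Hg).
    unfold heat_flux. f_equal. apply der1_eq_lim. eapply derivable_pt_lim_eq_val.
    + apply derivable_pt_lim_mult; [exact (field_dx m t x Cm Hg)|].
      apply derivable_pt_lim_div;
        [apply derivable_pt_lim_const|exact (field_dx theta t x Ctheta Hg)|lra].
    + unfold Rsqr. field. lra.
Qed.

Let energy_rate u v :=
  m u v * pd1 m u v / rho u v - m u v ^ 2 * pd1 rho u v / (2 * rho u v ^ 2)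
  + pd1 rho u v * eint P Q (rho u v) (theta u v) + rho u v * eint_rate u v.

Lemma Etot_derivable t x : Dpos t x ->
  derivable_pt_lim (fun z => Etot P Q (rho z x) (m z x) (theta z x)) t (energy_rate t x).
Proof.
  intros Hg. destruct (Dpos_pos t x Hg) as [Hr Hth].
  assert (Hrho := field_dt rho t x Crho Hg). assert (Hm := field_dt m t x Cm Hg).
  unfold Etot. eapply derivable_pt_lim_eq_val.
  - apply derivable_pt_lim_plus; [apply derivable_pt_lim_div; [| |lra]|].
    + apply (derivable_pt_lim_comp (fun z => m z x) (fun y => y ^ 2)); [exact Hm|].
      apply derivable_pt_lim_pow.
    + apply derivable_pt_lim_mult; [apply derivable_pt_lim_const|exact Hrho].
    + apply derivable_pt_lim_mult; [exact Hrho|apply eint_derivable, Hg].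
  - unfold energy_rate, Rsqr. simpl. field. lra.
Qed.

Lemma energy_conservation t : 0 < t < T ->
  derivable_pt_lim
    (fun tau => integral (fun x => Etot P Q (rho tau x) (m tau x) (theta tau x)) v1 v2) t 0.
Proof.
  intros Ht. assert (Ht' : 0 < t <= T) by lra.
  eapply derivable_pt_lim_eq_val.
  - apply (derivable_pt_lim_integral_param Dpos
             (fun z x => Etot P Q (rho z x) (m z x) (theta z x)) energy_rate
             v1 v2 t Hv Dpos_open (Dpos_slab_nbhd t Ht)); intros u v Hg;
      [exact (Etot_derivable u v Hg)
      |unfold energy_rate, eint_rate, eint; cont2|unfold Etot, eint; cont2].
  - apply is_RInt_unique.
    apply (is_RInt_ext_open (fun x =>
      (kinetic_rate t x - momentum_flux t x + momentum_source t x)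
      + (heat t x - heat_flux t x * pd2 m t x + heat_source t x)));
      [lra| |].
    + intros x Hx.
      destruct (Hpos t x Ht' ltac:(lra)). assert (Hbal := mass_balance t x Ht' Hx).
      unfold kinetic_rate, momentum_flux, momentum_source, heat, heat_flux, heat_source,
        energy_rate, eint.
      replace (pd1 rho t x) with (- pd2 m t x) by lra. field. lra.
    + rewrite <- (Rplus_0_r 0).
      apply (@is_RInt_plus R_CompleteNormedModule);
        [apply momentum_tested_m|apply energy_tested_theta]; exact Ht'.
Qed.

Let entropy_rate u v :=
  pd1 rho u v * (S (theta u v) - pd2 P (rho u v) (theta u v))
  + rho u v * (der1 Q (theta u v) / theta u v * pd1 theta u v
               - (pd1 (pd2 P) (rho u v) (theta u v) * pd1 rho u v
                  + pd2 (pd2 P) (rho u v) (theta u v) * pd1 theta u v)).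

Lemma entropy_derivable t x : Dpos t x ->
  derivable_pt_lim (fun z => rho z x * entr P Q (rho z x) (theta z x)) t (entropy_rate t x).
Proof.
  intros Hg. destruct (Dpos_pos t x Hg) as [Hr Hth].
  assert (Hrho := field_dt rho t x Crho Hg). assert (Htheta := field_dt theta t x Ctheta Hg).
  unfold entr. eapply derivable_pt_lim_eq_val.
  - apply derivable_pt_lim_mult; [exact Hrho|apply derivable_pt_lim_minus].
    + apply (derivable_pt_lim_comp (fun z => theta z x) S); [exact Htheta|].
      apply S_derivable, Hth.
    + exact (derivable_pt_lim_state (pd2 P) _ _ t _ _ CP2 Hr Hth Hrho Htheta).
  - unfold entropy_rate, S. ring.
Qed.

(* [m (Q(theta)/theta - S(theta))] is the entropy flux; since [S' = Q'/theta],
   its space derivative only involves [Q] and not [Q']. *)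
Let entropy_flux_dx u v :=
  pd2 m u v * (Q (theta u v) / theta u v - S (theta u v))
  - m u v * Q (theta u v) * pd2 theta u v / theta u v ^ 2.

Lemma entropy_flux_derivable t x : Dpos t x ->
  derivable_pt_lim (fun y => m t y * (Q (theta t y) / theta t y - S (theta t y))) x
    (entropy_flux_dx t x).
Proof.
  intros Hg. destruct (Dpos_pos t x Hg) as [Hr Hth].
  assert (Htheta := field_dx theta t x Ctheta Hg).
  eapply derivable_pt_lim_eq_val.
  - apply derivable_pt_lim_mult; [exact (field_dx m t x Cm Hg)|apply derivable_pt_lim_minus].
    + apply derivable_pt_lim_div; [|exact Htheta|lra].
      apply (derivable_pt_lim_comp (fun y => theta t y) Q); [exact Htheta|].
      apply derivable_pt_lim_Q, Hth.
    + apply (derivable_pt_lim_comp (fun y => theta t y) S); [exact Htheta|].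
      apply S_derivable, Hth.
  - unfold entropy_flux_dx, Rsqr. field. lra.
Qed.

Lemma entropy_conservation t : 0 < t < T ->
  derivable_pt_lim
    (fun tau => integral (fun x => rho tau x * entr P Q (rho tau x) (theta tau x)) v1 v2) t 0.
Proof.
  intros Ht. assert (Ht' : 0 < t <= T) by lra.
  eapply derivable_pt_lim_eq_val.
  - apply (derivable_pt_lim_integral_param Dpos
             (fun z x => rho z x * entr P Q (rho z x) (theta z x)) entropy_rate
             v1 v2 t Hv Dpos_open (Dpos_slab_nbhd t Ht)); intros u v Hg;
      [exact (entropy_derivable u v Hg)|unfold entropy_rate; cont2|unfold entr; cont2].
  - apply is_RInt_unique.
    apply (is_RInt_ext_open (fun x =>
      (heat t x / theta t x
       - heat_flux t x * (pd2 m t x / theta t x - m t x * pd2 theta t x / theta t x ^ 2)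
       + heat_source t x / theta t x) + entropy_flux_dx t x)); [lra| |].
    + intros x Hx.
      destruct (Hpos t x Ht' ltac:(lra)). assert (Hbal := mass_balance t x Ht' Hx).
      unfold heat, eint_rate, heat_flux, heat_source, entropy_flux_dx, entropy_rate.
      replace (pd1 rho t x) with (- pd2 m t x) by lra. field. lra.
    + rewrite <- (Rplus_0_r 0).
      apply (@is_RInt_plus R_CompleteNormedModule); [exact (energy_tested_one t Ht')|].
      destruct (Hbd t Ht') as [Hm1 Hm2].
      apply (is_RInt_derive_vanishing_ends
               (fun y => m t y * (Q (theta t y) / theta t y - S (theta t y))));
        [lra| | |rewrite Hm1; ring|rewrite Hm2; ring];
        intros x Hx; assert (Hg := Dpos_slab t x Ht' Hx).
      * exact (entropy_flux_derivable t x Hg).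
      * apply (continuity_2d_pt_snd entropy_flux_dx). unfold entropy_flux_dx. cont2.
Qed.

End Conservation.

Theorem lemma3
  (v1 v2 T : R) (P : R -> R -> R) (Q : R -> R) (cv : R)
  (rho m theta : R -> R -> R)
  (Hv : v1 < v2) (HT : 0 < T)
  (HP : Ck2 3 (fun r th => 0 < r /\ 0 < th) P)
  (HQ : Ck1 2 (fun th => 0 < th) Q)
  (Hcv : 0 < cv)
  (HP1 : forall r th, 0 < r -> 0 < th -> 0 <= pd1 P r th)
  (HP2 : forall r th, 0 < r -> 0 < th ->
           0 <= pd1 (fun r' th' => r' * pd1 P r' th') r th)
  (HP3 : forall r th, 0 < r -> 0 < th ->
           cv <= der1 Q th - th * pd2 (pd2 P) r th)
  (Hsm : exists del, 0 < del /\
     let D := fun t x => 0 < t < T + del /\ v1 - del < x < v2 + del in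
     Ck2 1 D rho /\ Ck2 1 D m /\ Ck2 1 D theta)
  (Hpos : forall t x, 0 < t <= T -> v1 <= x <= v2 ->
            0 < rho t x /\ 0 < theta t x)
  (Hbd : forall t, 0 < t <= T -> m t v1 = 0 /\ m t v2 = 0)
  (Hmass : forall t, 0 < t <= T -> forall q, C0_near v1 v2 q ->
     ip v1 v2 (fun x => pd1 rho t x) q + ip v1 v2 (fun x => pd2 m t x) q = 0)
  (Hmom : forall t, 0 < t <= T -> forall v, C1_near v1 v2 v ->
     v v1 = 0 -> v v2 = 0 ->
     ip v1 v2 (fun x => / rho t x * pd1 m t x
                        - m t x / (2 * rho t x ^ 2) * pd1 rho t x) v
     - ip v1 v2 (fun x => m t x ^ 2 / (2 * rho t x ^ 2)
                          + pd1 (fun r th => r * P r th) (rho t x) (theta t x))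
                (der1 v)
     + ip v1 v2 (fun x => m t x / (2 * rho t x ^ 2) * pd2 m t x
                          - pd2 P (rho t x) (theta t x) * pd2 theta t x) v = 0)
  (Hen : forall t, 0 < t <= T -> forall w, C1_near v1 v2 w ->
     ip v1 v2 (fun x => rho t x
                 * pd1 (fun t' x' => eint P Q (rho t' x') (theta t' x')) t x
                 - pres P (rho t x) (theta t x) / rho t x * pd1 rho t x)
              (fun x => w x / theta t x)
     - ip v1 v2 (fun x => Q (theta t x)
                          - theta t x * pd2 P (rho t x) (theta t x))
                (der1 (fun x => m t x * (w x / theta t x)))
     + ip v1 v2 (fun x => m t x * pd2 P (rho t x) (theta t x) * pd2 theta t x)
                (fun x => w x / theta t x) = 0) :
  forall t, 0 < t < T ->
    derivable_pt_lim (fun tau => integral (fun x => rho tau x) v1 v2) t 0 /\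
    derivable_pt_lim
      (fun tau => integral (fun x => Etot P Q (rho tau x) (m tau x) (theta tau x)) v1 v2)
      t 0 /\
    derivable_pt_lim
      (fun tau => integral (fun x => rho tau x * entr P Q (rho tau x) (theta tau x)) v1 v2)
      t 0.
Proof.
  intros t Ht.
  destruct Hsm as [del [Hdel [Crho [Cm Ctheta]]]].
  assert (CP := Ck2_down 2 _ _ HP). assert (CQ := Ck1_down 1 _ _ HQ).
  split; [|split].
  - exact (mass_conservation v1 v2 T del rho m theta Hv Hdel Crho Cm Ctheta
             Hpos Hbd Hmass t Ht).
  - exact (energy_conservation v1 v2 T del P Q rho m theta Hv Hdel CP CQ Crho Cm Ctheta
             Hpos Hbd Hmass Hmom Hen t Ht).
  - exact (entropy_conservation v1 v2 T del P Q rho m theta Hv Hdel CP CQ Crho Cm Ctheta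
             Hpos Hbd Hmass Hen t Ht).
Qed.
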